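(* Let $(R,d)$ be a finitely generated fusion algebra and let $\rho:\mathcal{C}_R\to B(\ell^2(I))$ be the right regular representation of $\mathcal{C}_R$. Then $\mathrm{F\o l}(R,d)\ge\mathrm{Kaz}(\rho,(R,d))^2$.
   Context: A fusion algebra $(R,d)$ consists of a set $I$ with distinguished $e$ and involution $\alpha\mapsto\bar\alpha$, a unital ring structure on $R=\mathbb{Z}[I]$ with unit $e$ and $\xi\eta=\sum_\alpha N^\alpha_{\xi,\eta}\alpha$, $N^\alpha_{\xi,\eta}\in\mathbb{Z}_{\ge0}$ finitely many nonzero, the involution extending to a $\mathbb{Z}$-linear antimultiplicative involution, Frobenius reciprocity $N^\alpha_{\xi,\eta}=N^\xi_{\alpha,\bar\eta}=N^\eta_{\bar\xi,\alpha}$, and $\mathbb{Z}$-linear multiplicative $d:R\to\mathbb{R}$ with $d(\bar\alpha)=d(\alpha)\ge1$ on $I$. $\mathrm{supp}(r)$: elements of $I$ with nonzero coefficient in $r$. $|A|=\sum_{\alpha\in A}d(\alpha)^2$, $A^c=I\setminus A$. A finite generating set is a finite $X\subseteq I$ with $\bar X=X$ such that each $\alpha\in I$ lies in $\mathrm{supp}(x_1\cdots x_n)$ for some $x_i\in X$; $R$ is finitely generated if one exists. $\partial_X(A)=\{\alpha\in A:\exists x\in X,\ \mathrm{supp}(\alpha x)\not\subseteq A\}\cup\{\alpha\in A^c:\exists x\in X,\ \mathrm{supp}(\alpha x)\not\subseteq A^c\}$; $\mathrm{F\o l}_X(R,d)=\inf_A|\partial_XA|/|A|$ over nonempty finite $A\subseteq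 I$ and $\mathrm{F\o l}(R,d)=\inf_X\mathrm{F\o l}_X(R,d)$ over finite generating sets. $\mathcal{C}_R=\mathbb{C}[I]$ is the complexification of $R$ (a unital $*$-algebra); the right regular representation is $\rho(\alpha)\delta_\beta=\sum_{\eta\in I}N^\eta_{\beta,\bar\alpha}\delta_\eta$. For a unital $*$-representation $\pi$ on $H_\pi$ and a finite generating set $X$, $\mathrm{Kaz}(X,\pi,(R,d))=\inf_{\xi\in H_\pi,\|\xi\|=1}\max_{\alpha\in X}\frac{\|\pi(\alpha)\xi-d(\alpha)\xi\|}{d(\alpha)}$ and $\mathrm{Kaz}(\pi,(R,d))=\inf_X\mathrm{Kaz}(X,\pi,(R,d))$ over finite generating sets. *)

From HB Require Import structures.
From mathcomp Require Import all_boot all_algebra finmap complex.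
From mathcomp Require Import all_classical all_reals all_analysis.

Set Implicit Arguments.
Unset Strict Implicit.
Unset Printing Implicit Defensive.

Import GRing.Theory Num.Theory.
Local Open Scope classical_set_scope.
Local Open Scope ring_scope.

(* The structure constants are
   N a x y = N^a_{x,y} (coefficient of a in x*y).  [fa_psupp x y] is a finite
   list containing every a with N^a_{x,y} <> 0 (this is the hypothesis
   "finitely many nonzero"); all finite sums below range over it, and their
   values do not depend on the particular list chosen. *)
Record fusion_algebra (I : choiceType) (R : realType) := FusionAlgebra {
  fa_e : I;
  fa_bar : I -> I;
  fa_N : I -> I -> I -> nat;
  fa_psupp : I -> I -> seq I;
  fa_d : I -> R;
  fa_psuppP : forall a x y, fa_N a x y != 0%N -> a \in fa_psupp x y;
  fa_barK : involutive fa_bar;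
  fa_unitl : forall a y, fa_N a fa_e y = (a == y) :> nat;
  fa_unitr : forall a x, fa_N a x fa_e = (a == x) :> nat;
  (* associativity: (x y) z = x (y z), coefficient of a *)
  fa_assoc : forall x y z a,
    (\sum_(b <- undup (fa_psupp x y)) fa_N b x y * fa_N a b z =
     \sum_(c <- undup (fa_psupp y z)) fa_N c y z * fa_N a x c)%N;
  (* the Z-linear extension of bar is antimultiplicative: bar(xy) = bar y bar x *)
  fa_antimult : forall a x y, fa_N (fa_bar a) (fa_bar y) (fa_bar x) = fa_N a x y;
  fa_frob1 : forall a x y, fa_N a x y = fa_N x a (fa_bar y);
  fa_frob2 : forall a x y, fa_N a x y = fa_N y (fa_bar x) a;
  (* d : R -> reals, Z-linear (determined by its values on I) and multiplicative *)
  fa_dmul : forall x y,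
    fa_d x * fa_d y = \sum_(a <- undup (fa_psupp x y)) (fa_N a x y)%:R * fa_d a;
  fa_dbar : forall a, fa_d (fa_bar a) = fa_d a;
  fa_dge1 : forall a, 1 <= fa_d a
}.

Section FusionDefs.
Variables (I : choiceType) (R : realType) (F : fusion_algebra I R).
Local Notation e := (fa_e F).
Local Notation bar := (fa_bar F).
Local Notation N := (fa_N F).
Local Notation ps := (fa_psupp F).
Local Notation d := (fa_d F).

(* An element of N[I] subset R = Z[I], given by its coefficient function and a
   finite list containing its support. *)
Definition fa_elt := ((I -> nat) * seq I)%type.

Definition fa_mulgen (r : fa_elt) (x : I) : fa_elt :=
  ((fun a => \sum_(b <- undup r.2) r.1 b * N a b x)%N,
   flatten [seq ps b x | b <- r.2]).

Definition fa_prod (xs : seq I) : fa_elt :=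
  foldl fa_mulgen ((fun a => nat_of_bool (a == e)), [:: e]) xs.

Definition fa_supp_prod (xs : seq I) : set I := [set a | (fa_prod xs).1 a != 0%N].

Definition fa_generating (X : {fset I}) : Prop :=
  (forall x, x \in X -> bar x \in X) /\
  (forall a, exists xs : seq I, all (fun x => x \in X) xs /\ fa_supp_prod xs a).

Definition fa_fin_generated : Prop := exists X, fa_generating X.

Definition fa_sizeE (B : set I) : \bar R := \esum_(a in B) ((d a) ^+ 2)%:E.

Definition fa_size (A : {fset I}) : R := \sum_(a <- A) (d a) ^+ 2.

(* boundary d_X(A); supp(a x) = { g | N^g_{a,x} <> 0 } *)
Definition fa_boundary (X A : {fset I}) : set I :=
  [set a | (a \in A /\ exists x, x \in X /\ exists g, N g a x != 0%N /\ g \notin A) \/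
           (a \notin A /\ exists x, x \in X /\ exists g, N g a x != 0%N /\ g \in A)].

Definition fa_FolX (X : {fset I}) : \bar R :=
  ereal_inf [set (fa_sizeE (fa_boundary X A) * ((fa_size A)^-1)%:E)%E
            | A in [set A : {fset I} | A != fset0]].

Definition fa_Fol : \bar R := ereal_inf [set fa_FolX X | X in fa_generating].

Definition sqnormC (z : R[i]) : R := complex.Re z ^+ 2 + complex.Im z ^+ 2.

Definition l2_sqnorm (v : I -> R[i]) : \bar R := \esum_(i in setT) (sqnormC (v i))%:E.
Definition l2_norm (v : I -> R[i]) : \bar R := sqrte (l2_sqnorm v).

Definition l2_space : set (I -> R[i]) := [set v | (l2_sqnorm v < +oo)%E].

(* rho(a) delta_b = sum_g N^g_{b, bar a} delta_g, hence
   (rho(a) v)(g) = sum_b N^g_{b, bar a} v(b); by Frobenius reciprocity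
   N^g_{b,bar a} = N^b_{g,a}, so the sum ranges over the finite list ps g a. *)
Definition rho (a : I) (v : I -> R[i]) : I -> R[i] :=
  fun g => \sum_(b <- undup (ps g a)) (N g b (bar a))%:R * v b.

Definition l2_unit_sphere : set (I -> R[i]) :=
  [set v | l2_space v /\ l2_norm v = 1%E].

Definition fa_KazX (X : {fset I}) : \bar R :=
  ereal_inf [set (\big[maxe/0%E]_(a <- X)
                    (l2_norm (fun g => (rho a v g - real_complex R (d a) * v g)%R) * ((d a)^-1)%:E))%E
            | v in l2_unit_sphere].

Definition fa_Kaz_rho : \bar R := ereal_inf [set fa_KazX X | X in fa_generating].

End FusionDefs.

From HB Require Import structures.
From mathcomp Require Import all_boot all_algebra finmap complex.
From mathcomp Require Import all_classical all_reals all_analysis.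
From mathcomp Require Import lra.

(** For a nonempty finite set A, test the Kazhdan constant against the unit
    vector xi = 1_A d / sqrt|A|.  For a in X, (rho(a) xi - d(a) xi)(g) equals
    (sum_b N^b_{g,a} 1_A(b) d(b) - d(a) 1_A(g) d(g)) / sqrt|A|; both terms lie
    in [0, d(a) d(g)] because sum_b N^b_{g,a} d(b) = d(g) d(a), and they agree
    unless g is in the boundary of A.  Hence
    ||rho(a) xi - d(a) xi||^2 / d(a)^2 <= |boundary_X A| / |A|, and taking
    infima gives Kaz(rho)^2 <= Fol. *)

Set Implicit Arguments.
Unset Strict Implicit.
Unset Printing Implicit Defensive.

Import GRing.Theory Num.Theory order.Order.TTheory.
Local Open Scope classical_set_scope.
Local Open Scope ring_scope.

Section ESum.
Variables (T : choiceType) (R : realType).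

Lemma ge0_esumZl (D : set T) (f : T -> \bar R) (r : R) :
  0 < r -> (forall i, 0 <= f i)%E ->
  (\esum_(i in D) (r%:E * f i) = r%:E * \esum_(i in D) f i)%E.
Proof.
move=> r0 f0; rewrite /esum -ereal_sup_pZl//; congr ereal_sup.
apply/seteqP; split => x /=.
  move=> [S hS <-]; exists (\sum_(i \in S) f i)%E; first by exists S.
  by rewrite ge0_mule_fsumr.
by move=> [y [S hS <-] <-]; exists S => //; rewrite ge0_mule_fsumr.
Qed.

Lemma esum_fset_support (A : {fset T}) (f : T -> R) :
  (forall i, 0 <= f i) -> (forall i, i \notin A -> f i = 0) ->
  (\esum_(i in setT) (f i)%:E = (\sum_(i <- A) f i)%:E)%E.
Proof.
move=> f_ge0 f_out.
transitivity (\esum_(i in setT) (if i \in [set` A] then (f i)%:E else 0))%E.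
  apply: eq_esum => i _; case: ifPn => // iA.
  by rewrite f_out //; apply: contra iA; rewrite in_setE.
rewrite -esum_mkcond esum_fset //; last by move=> i _; rewrite lee_fin.
by rewrite fsumEFin // fsbig_finite // set_fsetK.
Qed.

End ESum.

Lemma sqnormC_real (R : realType) (x : R) : sqnormC (real_complex R x) = x ^+ 2.
Proof. by rewrite /sqnormC /= expr0n /= addr0. Qed.

Section RegularRepresentation.
Variables (I : choiceType) (R : realType) (F : fusion_algebra I R).
Local Notation N := (fa_N F).
Local Notation ps := (fa_psupp F).
Local Notation d := (fa_d F).

Lemma fa_d_gt0 g : 0 < d g.
Proof. exact: lt_le_trans (fa_dge1 F g). Qed.

Lemma fa_d_ge0 g : 0 <= d g.
Proof. exact: ltW (fa_d_gt0 g). Qed.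

Lemma fa_size_gt0 (A : {fset I}) : A != fset0 -> 0 < fa_size F A.
Proof.
case/fset0Pn => x xA; rewrite /fa_size (big_fsetD1 x xA) /=.
rewrite ltr_pwDl ?exprn_gt0 ?fa_d_gt0 //.
by apply: sumr_ge0 => i _; exact: sqr_ge0.
Qed.

Lemma l2_sqnorm_real (f : I -> R) :
  l2_sqnorm (fun g => real_complex R (f g)) = \esum_(g in setT) (f g ^+ 2)%:E.
Proof. by apply: eq_esum => g _; rewrite sqnormC_real. Qed.

(* rho on real vectors, rewritten with N^b_{g,a} = N^g_{b,bar a}. *)
Definition fa_ract (a : I) (f : I -> R) (g : I) : R :=
  \sum_(b <- undup (ps g a)) (N b g a)%:R * f b.

Lemma rho_real a (f : I -> R) g :
  rho F a (fun b => real_complex R (f b)) g = real_complex R (fa_ract a f g).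
Proof.
rewrite /rho /fa_ract rmorph_sum; apply: eq_bigr => b _.
by rewrite rmorphM rmorph_nat -fa_frob1.
Qed.

Lemma rho_real_displacement a (f : I -> R) g :
  (rho F a (fun b => real_complex R (f b)) g - real_complex R (d a) * real_complex R (f g))%R
  = real_complex R (fa_ract a f g - d a * f g).
Proof. by rewrite rho_real -rmorphM -rmorphB. Qed.

Lemma fa_Kaz_rho_ge0 : (0 <= fa_Kaz_rho F)%E.
Proof.
apply: le_ereal_inf_tmp => _ [Y _ <-]; apply: le_ereal_inf_tmp => _ [w _ <-].
apply: (big_ind (fun x => 0 <= x)%E) => //.
- by move=> x y hx hy; rewrite le_max hx.
- move=> a _; apply: mule_ge0; first exact: sqrte_ge0.
  by rewrite lee_fin invr_ge0 fa_d_ge0.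
Qed.

Definition folner_ratio (X A : {fset I}) : \bar R :=
  (fa_sizeE F (fa_boundary F X A) * ((fa_size F A)^-1)%:E)%E.

Lemma folner_ratio_ge0 X A : (0 <= folner_ratio X A)%E.
Proof.
apply: mule_ge0; first by apply: esum_ge0 => g _; rewrite lee_fin sqr_ge0.
by rewrite lee_fin invr_ge0 sumr_ge0 // => g _; exact: sqr_ge0.
Qed.

Variables (X A : {fset I}).

Definition dind (g : I) : R := if g \in A then d g else 0.

Lemma dind_ge0 g : 0 <= dind g.
Proof. by rewrite /dind; case: ifP => _; [exact: fa_d_ge0 | exact: lexx]. Qed.

Lemma ract_dind_ge0 a g : 0 <= fa_ract a dind g.
Proof. by apply: sumr_ge0 => b _; rewrite mulr_ge0 ?dind_ge0. Qed.

Lemma ract_dind_le a g : fa_ract a dind g <= d g * d a.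
Proof.
rewrite fa_dmul; apply: ler_sum => b _; apply: ler_wpM2l => //.
by rewrite /dind; case: ifP => _; [exact: lexx | exact: fa_d_ge0].
Qed.

Lemma ract_dind_notin_boundary a g : a \in X -> ~ fa_boundary F X A g ->
  fa_ract a dind g = d a * dind g.
Proof.
move=> aX g_int; rewrite /dind; case: ifPn => gA.
  rewrite mulrC fa_dmul; apply: eq_bigr => b _; rewrite /dind.
  case: ifPn => // bA; case: (eqVneq (N b g a) 0%N) => [-> | nz].
    by rewrite !mul0r.
  by exfalso; apply: g_int; left; split => //; exists a; split => //; exists b.
rewrite mulr0; apply: big1 => b _; rewrite /dind.
case: ifPn => bA; last by rewrite mulr0.
case: (eqVneq (N b g a) 0%N) => [-> | nz]; first by rewrite mul0r.
by exfalso; apply: g_int; right; split => //; exists a; split => //; exists b.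
Qed.

Lemma ract_dind_displacement_sqr_le a g : a \in X ->
  (fa_ract a dind g - d a * dind g) ^+ 2 <=
  (if g \in fa_boundary F X A then (d a * d g) ^+ 2 else 0).
Proof.
move=> aX; case: ifPn => [_ | /negP g_int].
  have := ract_dind_ge0 a g; have := ract_dind_le a g.
  have := fa_d_gt0 a; have := fa_d_gt0 g.
  rewrite /dind; case: ifP => _; nra.
rewrite ract_dind_notin_boundary // => [|g_bd]; first by rewrite subrr expr0n.
by apply: g_int; rewrite in_setE.
Qed.

Hypothesis A_neq0 : A != fset0.

Local Notation sA := (fa_size F A).

Definition folner_vec (g : I) : R := dind g / Num.sqrt sA.

Lemma folner_vec_unit : l2_unit_sphere (fun g => real_complex R (folner_vec g)).
Proof.
have sA_gt0 := fa_size_gt0 A_neq0.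
have sqnorm1 : l2_sqnorm (fun g => real_complex R (folner_vec g)) = 1%E.
  rewrite l2_sqnorm_real (esum_fset_support (A := A)); first last.
  - by move=> g gA; rewrite /folner_vec /dind (negbTE gA) mul0r expr0n.
  - by move=> g; exact: sqr_ge0.
  rewrite big_seq (eq_bigr (fun g => d g ^+ 2 / sA)); last first.
    by move=> g gA; rewrite /folner_vec /dind gA expr_div_n sqr_sqrtr ?(ltW sA_gt0).
  by rewrite -mulr_suml -big_seq divff // gt_eqF.
split; first by rewrite /l2_space /= sqnorm1 ltry.
by rewrite /l2_norm sqnorm1 /= sqrtr1.
Qed.

Lemma folner_vec_displacement_sqnorm a : a \in X ->
  (l2_sqnorm (fun g => real_complex R (fa_ract a folner_vec g - d a * folner_vec g))
   <= (d a ^+ 2)%:E * folner_ratio X A)%E.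
Proof.
move=> aX; have sA_gt0 := fa_size_gt0 A_neq0.
rewrite l2_sqnorm_real /fa_sizeE muleCA muleC -EFinM -ge0_esumZl; first last.
- by move=> g; rewrite lee_fin sqr_ge0.
- by rewrite mulr_gt0 ?invr_gt0 ?exprn_gt0 ?fa_d_gt0.
rewrite (esum_mkcond (fa_boundary F X A)); apply: le_esum => g _.
have -> : fa_ract a folner_vec g - d a * folner_vec g
          = (fa_ract a dind g - d a * dind g) / Num.sqrt sA.
  by rewrite /fa_ract /folner_vec mulrBl mulr_suml mulrA; congr (_ - _);
     apply: eq_bigr => b _; rewrite mulrA.
rewrite expr_div_n sqr_sqrtr ?(ltW sA_gt0) //.
have := ract_dind_displacement_sqr_le g aX.
case: ifPn => _ H; rewrite -?EFinM lee_fin.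
- rewrite [X in _ <= X]mulrAC -exprMn; apply: ler_wpM2r => //.
  by rewrite invr_ge0 ltW.
- by rewrite ler_pdivrMr // mul0r.
Qed.

Lemma folner_vec_displacement_le a : a \in X ->
  (l2_norm (fun g => (rho F a (fun b => real_complex R (folner_vec b)) g
                      - real_complex R (d a) * real_complex R (folner_vec g))%R)
   * ((d a)^-1)%:E <= sqrte (folner_ratio X A))%E.
Proof.
move=> aX; under eq_fun do rewrite rho_real_displacement.
have da_inv : ((d a)^-1)%:E = sqrte (((d a)^-1 ^+ 2)%:E).
  by rewrite /= sqrtr_sqr ger0_norm // invr_ge0 fa_d_ge0.
rewrite /l2_norm da_inv -sqrteM; last first.
  by apply: esum_ge0 => g _; rewrite lee_fin /sqnormC addr_ge0 // sqr_ge0.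
rewrite lee_sqrt; last exact: folner_ratio_ge0.
apply: le_trans (lee_wpmul2r _ (folner_vec_displacement_sqnorm aX)) _.
  by rewrite lee_fin sqr_ge0.
by rewrite muleAC -EFinM exprVn mulfV ?mul1e // expf_neq0 // gt_eqF // fa_d_gt0.
Qed.

Lemma fa_KazX_le_folner_ratio : (fa_KazX F X <= sqrte (folner_ratio X A))%E.
Proof.
apply: ge_ereal_inf; eexists.
  by exists (fun g => real_complex R (folner_vec g)); first exact: folner_vec_unit.
rewrite big_seq; apply: (big_ind (fun x => x <= sqrte (folner_ratio X A))%E).
- exact: sqrte_ge0.
- by move=> x y hx hy; rewrite ge_max hx hy.
- by move=> a aX; exact: folner_vec_displacement_le.
Qed.

Lemma fa_Kaz_rho_sqr_le_folner_ratio :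
  fa_generating F X -> (fa_Kaz_rho F * fa_Kaz_rho F <= folner_ratio X A)%E.
Proof.
move=> X_gen.
have Kaz_le : (fa_Kaz_rho F <= sqrte (folner_ratio X A))%E.
  by apply: le_trans fa_KazX_le_folner_ratio; apply: ereal_inf_lbound; exists X.
apply: le_trans (lee_pmul fa_Kaz_rho_ge0 fa_Kaz_rho_ge0 Kaz_le Kaz_le) _.
by rewrite -expe2 sqr_sqrte // folner_ratio_ge0.
Qed.

End RegularRepresentation.

Theorem proposition3p21 (I : choiceType) (R : realType) (F : fusion_algebra I R) :
  fa_fin_generated F ->
  (fa_Kaz_rho F * fa_Kaz_rho F <= fa_Fol F)%E.
Proof.
move=> _; apply: le_ereal_inf_tmp => _ [X X_gen <-].
apply: le_ereal_inf_tmp => _ [A A_neq0 <-].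
exact: fa_Kaz_rho_sqr_le_folner_ratio.
Qed.
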